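(* Let $c>0$, $f_s>0$, let $M,N,K\ge1$ be integers, $T_{\max}=(N-1)/f_s$, $\bm{r}^{\mathrm{mic}}_1,\dots,\bm{r}^{\mathrm{mic}}_M\in\mathbb{R}^3$ with $E_M=\{\bm{r}^{\mathrm{mic}}_m\}$, $\bm{x}\in\mathbb{R}^{MN}$. Let $\kappa$ be continuous with $\kappa(0)>0$ and $\lim_{|t|\to\infty}\kappa(t)=0$, and assume $\Gamma^K$ is amplitude lower-bounded. Let $(\bm{a}^l,\bm{r}^l)_{l}$ be a minimizing sequence in $\mathbb{R}_+^K\times\mathscr{C}^K$ for $\inf_{\mathbb{R}_+^K\times\mathscr{C}^K}T$, where $T(\bm{a},\bm{r})=\frac12\|\bm{x}-\sum_{k=1}^K a_k\gamma(\bm{r}_k)\|_2^2$. Then, up to extracting a subsequence, for each $k\in\{1,\dots,K\}$ one of the following holds: (i) there exist $\bm{r}_k\in\mathscr{C}$ and $a_k\in\mathbb{R}_+$ with $\bm{r}^l_k\to\bm{r}_k$ and $a^l_k\to a_k$ as $l\to\infty$; (ii) there exist $m_k\in\{1,\dots,M\}$ and $\widetilde a_k\in\mathbb{R}_+$ with $\bm{r}^l_k\to\bm{r}^{\mathrm{mic}}_{m_k}$, $a^l_k\to0$, and $\dfrac{a^l_k}{4\pi\|\bm{r}^l_k-\bm{r}^{\mathrm{mic}}_{m_k}\|_2}\to\widetilde a_k$ as $l\to\infty$.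
   Context: $\mathbb{R}_+=[0,+\infty)$, $\|\cdot\|_2$ Euclidean norm, $\bm{x}=(x_{m,n})_{1\le m\le M,0\le n\le N-1}$. For $\bm{r}\in\mathbb{R}^3\setminus E_M$, $\gamma_{m,n}(\bm{r})=\dfrac{\kappa\big(n/f_s-\|\bm{r}-\bm{r}^{\mathrm{mic}}_m\|_2/c\big)}{4\pi\|\bm{r}-\bm{r}^{\mathrm{mic}}_m\|_2}$. $\mathscr{C}=\bigcap_{m=1}^M\overline{B(\bm{r}^{\mathrm{mic}}_m,cT_{\max})}\setminus E_M$. $\Gamma^K(\bm{a},\bm{r})=\sum_k a_k\gamma(\bm{r}_k)$; it is amplitude lower-bounded if there is $C>0$ with $\|\Gamma^K(\bm{a},\bm{r})\|_2\ge C\sum_k a_k$ for all $(\bm{a},\bm{r})\in\mathbb{R}_+^K\times\mathscr{C}^K$. *)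

From HB Require Import structures.
From mathcomp Require Import all_boot all_order all_algebra.
From mathcomp Require Import all_classical all_reals all_analysis.
Set Implicit Arguments. Unset Strict Implicit. Unset Printing Implicit Defensive.
Import Order.TTheory GRing.Theory Num.Theory.
Import numFieldNormedType.Exports.
Local Open Scope ring_scope.

Section Defs.
Variable R : realType.

Definition enorm (n : nat) (v : 'rV[R]_n) : R :=
  Num.sqrt (\sum_(i < n) (v ord0 i) ^+ 2).

(* Euclidean norm of x = (x_{m,n}) in R^{MN} (Frobenius norm of the M x N array) *)
Definition frob (M N : nat) (A : 'M[R]_(M, N)) : R :=
  Num.sqrt (\sum_(i < M) \sum_(j < N) (A i j) ^+ 2).

Variables (kappa : R -> R) (c fs : R) (M N : nat) (rmic : 'I_M -> 'rV[R]_3).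

Definition Tmax : R := (N.-1)%:R / fs.

(* gamma(r) in R^{MN}; index m : 'I_M stands for m+1 in {1..M}, n : 'I_N for n in {0..N-1} *)
Definition gamma (r : 'rV[R]_3) : 'M[R]_(M, N) :=
  \matrix_(m < M, n < N)
    (kappa (n%:R / fs - enorm (r - rmic m) / c) / (4 * pi * enorm (r - rmic m))).

Definition inC (r : 'rV[R]_3) : Prop :=
  (forall m : 'I_M, enorm (r - rmic m) <= c * Tmax) /\ (forall m : 'I_M, r <> rmic m).

Variable K : nat.

Definition Gamma (a : 'I_K -> R) (r : 'I_K -> 'rV[R]_3) : 'M[R]_(M, N) :=
  \sum_(k < K) a k *: gamma (r k).

Definition in_dom (a : 'I_K -> R) (r : 'I_K -> 'rV[R]_3) : Prop :=
  (forall k, 0 <= a k) /\ (forall k, inC (r k)).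

Definition amplitude_lower_bounded : Prop :=
  exists C0 : R, 0 < C0 /\
    forall a r, in_dom a r -> C0 * (\sum_(k < K) a k) <= frob (Gamma a r).

Variable x : 'M[R]_(M, N).

Definition Tobj (a : 'I_K -> R) (r : 'I_K -> 'rV[R]_3) : R :=
  2^-1 * (frob (x - Gamma a r)) ^+ 2.

Definition infT : R := inf [set t : R | exists a r, in_dom a r /\ t = Tobj a r]%classic.
End Defs.

From HB Require Import structures.
From mathcomp Require Import all_boot all_order all_algebra.
From mathcomp Require Import all_classical all_reals all_analysis.
From mathcomp Require Import ring lra.
Set Implicit Arguments. Unset Strict Implicit. Unset Printing Implicit Defensive.
Import Order.TTheory GRing.Theory Num.Theory.
Import numFieldNormedType.Exports.
Local Open Scope classical_set_scope.
Local Open Scope ring_scope.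

(* The objective is bounded along a minimizing sequence, hence so are the
   entries of Gamma^K and, by the amplitude lower bound, the amplitudes; the
   positions stay in the bounded set C.  The first sample
   gamma_{m,0}(r) = kappa(-|r - r_m|/c) / (4 pi |r - r_m|) is bounded below on
   C and, kappa being continuous with kappa(0) > 0, exceeds
   kappa(0) / (8 pi |r - r_m|) near the microphone r_m.  Comparing with the
   bounded entry Gamma_{m,0} shows that the reduced amplitudes
   a_k / (4 pi |r_k - r_m|) stay bounded, so Bolzano-Weierstrass gives a
   subsequence along which positions and reduced amplitudes converge.  The
   amplitude is the reduced amplitude times 4 pi |r_k - r_m|: it converges,
   and tends to 0 when the limit position is the microphone r_m. *)

Section sequences.

Lemma increasing_seq_ge (f : nat -> nat) : increasing_seq f -> forall n, (n <= f n)%N.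
Proof.
move=> /increasing_seqP f_incr; elim=> [//|n IHn].
exact: leq_ltn_trans IHn (f_incr n).
Qed.

Lemma increasing_seq_cvg (f : nat -> nat) : increasing_seq f -> f @ \oo --> \oo.
Proof.
move=> /increasing_seq_ge f_ge A [n _ nA]; exists n => // m /= nm.
exact/nA/(leq_trans nm).
Qed.

Lemma cvg_subseq {T : topologicalType} {u : nat -> T} {f : nat -> nat} {l : T} :
  increasing_seq f -> u @ \oo --> l -> u \o f @ \oo --> l.
Proof. by move=> /increasing_seq_cvg f_oo /(cvg_comp _ _ f_oo). Qed.

Lemma increasing_seq_comp (f g : nat -> nat) :
  increasing_seq f -> increasing_seq g -> increasing_seq (f \o g).
Proof. by move=> f_incr g_incr m n; exact: etrans (f_incr _ _) (g_incr m n). Qed.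

Lemma bounded_fun_norm_le (R : realType) (T : Type) (u : T -> R) (B : R) :
  (forall t, `|u t| <= B) -> bounded_fun u.
Proof.
move=> uB; rewrite /= /bounded_near; near=> B' => t _ /=; apply: le_trans (uB t) _.
by near: B'; apply: nbhs_pinfty_ge; rewrite num_real.
Unshelve. all: by end_near. Qed.

Lemma bolzano_weierstrass_fin (R : realType) (I : finType) (u : I -> nat -> R) :
  (forall i, bounded_fun (u i)) ->
  exists2 f : nat -> nat, increasing_seq f & forall i, cvgn (u i \o f).
Proof.
move=> u_bnd.
suff [f f_incr f_cvg] : exists2 f : nat -> nat, increasing_seq f &
    forall i, i \in enum I -> cvgn (u i \o f).
  by exists f => // i; apply: f_cvg; rewrite mem_enum.
elim: (enum I) => [|i s [f f_incr f_cvg]]; first by exists id.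
have /bolzano_weierstrass[g g_incr ufg_cvg] : bounded_fun (u i \o f).
  by move: (u_bnd i); rewrite /= /bounded_near; apply: filterS => B uB n _; apply: uB.
exists (f \o g); first exact: increasing_seq_comp.
move=> j; rewrite inE => /orP[/eqP-> //|js].
have /cvg_ex[l ufl] := f_cvg j js.
exact: cvgP _ (cvg_subseq g_incr ufl).
Qed.

Lemma cvg_mx_entries (R : realType) m n (u : nat -> 'M[R]_(m, n)) (v : 'M[R]_(m, n)) :
  (forall i j, u l i j @[l --> \oo] --> v i j) -> u l @[l --> \oo] --> v.
Proof.
move=> uv; apply/cvg_ballP => e e0.
have : \forall l \near \oo, forall i j, ball (v i j) e (u l i j).
  apply: filter_forall => i; apply: filter_forall => j.
  exact: (cvg_ballP _ _).1 (uv i j) e e0.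
by apply: filterS => l uvl; split.
Qed.

End sequences.

Section euclidean_norms.
Variable R : realType.

Lemma ler_psum_term (I : finType) (F : I -> R) (i : I) :
  (forall j, 0 <= F j) -> F i <= \sum_j F j.
Proof. by move=> F_ge0; rewrite (bigD1 i) //= lerDl sumr_ge0. Qed.

Lemma entry_le_enorm n (v : 'rV[R]_n) j : `|v ord0 j| <= enorm v.
Proof.
rewrite /enorm -sqrtr_sqr ler_sqrt; last by apply: sumr_ge0 => i _; exact: sqr_ge0.
by apply: ler_psum_term => i; exact: sqr_ge0.
Qed.

Lemma enorm_eq0 n (v : 'rV[R]_n) : (enorm v == 0) = (v == 0).
Proof.
apply/idP/eqP => [|->]; last first.
  by rewrite /enorm big1 ?sqrtr0 // => i _; rewrite mxE expr0n.
rewrite sqrtr_eq0 => sum_le0.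
have sum_eq0 : \sum_i v ord0 i ^+ 2 = 0.
  by apply/eqP; rewrite eq_le sum_le0 sumr_ge0 // => i _; exact: sqr_ge0.
apply/rowP => j; rewrite mxE; apply/eqP; rewrite -sqrf_eq0; apply/eqP.
exact: (psumr_eq0P (fun i _ => sqr_ge0 _) sum_eq0).
Qed.

Lemma enorm0 n : enorm (0 : 'rV[R]_n) = 0.
Proof. by apply/eqP; rewrite enorm_eq0. Qed.

Lemma enorm_continuous n : continuous (@enorm R n).
Proof.
move=> v; apply: (@continuous_comp _ _ _ (fun w : 'rV[R]_n => \sum_i w ord0 i ^+ 2)).
  apply: (continuous_big add_continuous) => i _ w.
  by apply: (continuousM (s := fun w : 'rV[R]_n => w ord0 i)); exact: coord_continuous.
exact: sqrt_continuous.
Qed.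

Lemma cvg_enorm_subr n (u : nat -> 'rV[R]_n) (v p : 'rV[R]_n) :
  u l @[l --> \oo] --> v -> enorm (u l - p) @[l --> \oo] --> enorm (v - p).
Proof.
move=> uv; apply: (cvg_comp _ _ (cvgB uv (cvg_cst p))).
exact: enorm_continuous.
Qed.

Lemma entry_le_frob m n (A : 'M[R]_(m, n)) i j : `|A i j| <= frob A.
Proof.
have sq_ge0 i' j' : 0 <= A i' j' ^+ 2 by exact: sqr_ge0.
rewrite -sqrtr_sqr ler_sqrt; last by apply: sumr_ge0 => i' _; exact: sumr_ge0.
apply: le_trans (ler_psum_term (F := fun i' => \sum_j' A i' j' ^+ 2) i _).
  exact: ler_psum_term.
by move=> i'; exact: sumr_ge0.
Qed.

Lemma frob_le_entries m n (A : 'M[R]_(m, n)) E : 0 <= E ->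
  (forall i j, `|A i j| <= E) -> frob A <= Num.sqrt (m * n)%:R * E.
Proof.
move=> E_ge0 AE.
rewrite -[E in X in _ <= X]ger0_norm // -sqrtr_sqr -sqrtrM //.
rewrite /frob ler_sqrt ?mulr_ge0 ?sqr_ge0 //.
apply: (@le_trans _ _ (\sum_(i < m) \sum_(j < n) E ^+ 2)).
  apply: ler_sum => i _; apply: ler_sum => j _.
  by rewrite -real_normK ?num_real // ler_sqr ?nnegrE.
under eq_bigr do rewrite sumr_const card_ord.
by rewrite sumr_const card_ord -mulrnA mulr_natl mulnC.
Qed.

End euclidean_norms.

Section sources.
Variables (R : realType) (c fs : R) (M N : nat) (rmic : 'I_M -> 'rV[R]_3).

Lemma inC_dist_gt0 r m : inC c fs N rmic r -> 0 < enorm (r - rmic m).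
Proof.
move=> [_ r_nmic]; rewrite lt_neqAle sqrtr_ge0 andbT eq_sym enorm_eq0 subr_eq0.
exact/eqP/r_nmic.
Qed.

Lemma inC_entry_le r m j :
  inC c fs N rmic r -> `|r ord0 j| <= c * Tmax fs N + enorm (rmic m).
Proof.
move=> [r_ball _]; rewrite -[r](subrK (rmic m)) mxE.
apply: le_trans (ler_normD _ _) _; apply: lerD; last exact: entry_le_enorm.
exact: le_trans (entry_le_enorm _ _) (r_ball m).
Qed.

Lemma cvg_inC (r : nat -> 'rV[R]_3) (r' : 'rV[R]_3) :
  (forall l, inC c fs N rmic (r l)) -> r l @[l --> \oo] --> r' ->
  (forall m, r' <> rmic m) -> inC c fs N rmic r'.
Proof.
move=> r_in r_cvg r'_nmic; split=> // m.
apply: (cvgr_to_le (cvg_enorm_subr (p := rmic m) r_cvg)).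
by near=> l; have [] := r_in l.
Unshelve. all: by end_near. Qed.

Definition reduced_amplitude (a : R) (r : 'rV[R]_3) (m : 'I_M) : R :=
  a / (4 * pi * enorm (r - rmic m)).

Lemma reduced_amplitudeK a r m : inC c fs N rmic r ->
  reduced_amplitude a r m * (4 * pi * enorm (r - rmic m)) = a.
Proof.
move=> r_in; rewrite divfK // gt_eqF // !mulr_gt0 ?pi_gt0 //.
exact: inC_dist_gt0.
Qed.

Lemma reduced_amplitude_ge0 a r m : 0 <= a -> 0 <= reduced_amplitude a r m.
Proof. by move=> a_ge0; rewrite divr_ge0 // !mulr_ge0 ?pi_ge0 ?sqrtr_ge0. Qed.

Lemma source_subseq_cvg (m0 : 'I_M) K (a : nat -> 'I_K -> R)
    (r : nat -> 'I_K -> 'rV[R]_3) (B : R) :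
  (forall l, in_dom c fs N rmic (a l) (r l)) ->
  (forall l k m, reduced_amplitude (a l k) (r l k) m <= B) ->
  exists2 phi : nat -> nat, increasing_seq phi & forall k, exists r' : 'rV[R]_3,
    r (phi l) k @[l --> \oo] --> r' /\
    forall m, cvgn (fun l => reduced_amplitude (a (phi l) k) (r (phi l) k) m).
Proof.
move=> in_seq red_le.
pose u (i : 'I_K * ('I_3 + 'I_M)) l := match i.2 with
  | inl j => r l i.1 ord0 j
  | inr m => reduced_amplitude (a l i.1) (r l i.1) m end.
have [phi phi_incr u_cvg] : exists2 phi : nat -> nat, increasing_seq phi &
    forall i, cvgn (u i \o phi).
  apply: bolzano_weierstrass_fin => -[k [j|m]].
    apply: (bounded_fun_norm_le (B := c * Tmax fs N + enorm (rmic m0))) => l /=.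
    exact: inC_entry_le ((in_seq l).2 k).
  apply: (bounded_fun_norm_le (B := B)) => l /=.
  by rewrite ger0_norm ?red_le // reduced_amplitude_ge0 // (in_seq l).1.
exists phi => // k; exists (\row_j limn (u (k, inl j) \o phi)); split=> [|m].
  by apply: cvg_mx_entries => i j; rewrite (ord1 i) mxE; exact: (u_cvg (k, inl j)).
exact: (u_cvg (k, inr m)).
Qed.

Lemma source_limit_cases (m0 : 'I_M) (a : nat -> R) (r : nat -> 'rV[R]_3) r' :
  (forall l, 0 <= a l) -> (forall l, inC c fs N rmic (r l)) ->
  r l @[l --> \oo] --> r' ->
  (forall m, cvgn (fun l => reduced_amplitude (a l) (r l) m)) ->
  (exists a' : R, inC c fs N rmic r' /\ 0 <= a' /\ a l @[l --> \oo] --> a') \/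
  (exists (m : 'I_M) (a' : R), 0 <= a' /\ r l @[l --> \oo] --> rmic m /\
     a l @[l --> \oo] --> 0 /\ reduced_amplitude (a l) (r l) m @[l --> \oo] --> a').
Proof.
move=> a_ge0 r_in r_cvg red_cvg.
pose red_lim m := limn (fun l => reduced_amplitude (a l) (r l) m).
have a_cvg m : a l @[l --> \oo] --> red_lim m * (4 * pi * enorm (r' - rmic m)).
  under eq_cvg => l do rewrite -(reduced_amplitudeK (a l) m (r_in l)).
  by apply: cvgM; [exact: red_cvg | apply: cvgM; [exact: cvg_cst | exact: cvg_enorm_subr]].
have [[m r'E]|r'_nmic] := pselect (exists m, r' = rmic m).
  right; exists m, (red_lim m); split; last split.
  - by apply: limr_ge (red_cvg m) _; near=> l; exact: reduced_amplitude_ge0.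
  - by rewrite -r'E.
  - by split; [have := a_cvg m; rewrite r'E subrr enorm0 !mulr0 | exact: red_cvg].
left; exists (red_lim m0 * (4 * pi * enorm (r' - rmic m0))); split; last split.
- by apply: cvg_inC r_in r_cvg _ => m r'E; apply: r'_nmic; exists m.
- by apply: cvgr_to_ge (a_cvg m0) _; near=> l.
- exact: a_cvg.
Unshelve. all: by end_near. Qed.

End sources.

Section first_sample.
Variables (R : realType) (kappa : R -> R) (c fs : R) (M N : nat).
Variable rmic : 'I_M -> 'rV[R]_3.
Hypotheses (c_gt0 : 0 < c) (fs_gt0 : 0 < fs).
Hypotheses (kappa_cont : continuous kappa) (kappa0_gt0 : 0 < kappa 0).
Variables (n0 : 'I_N) (K : nat).
Hypothesis n0_eq0 : n0 = 0%N :> nat.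

Local Notation gamma0 r m := (gamma kappa c fs N rmic r m n0).

Let four_pi_gt0 : 0 < 4 * pi :> R.
Proof. by rewrite mulr_gt0 ?pi_gt0. Qed.

Lemma gamma_first_sample r m :
  gamma0 r m = kappa (- (enorm (r - rmic m) / c)) / (4 * pi * enorm (r - rmic m)).
Proof. by rewrite mxE n0_eq0 mul0r sub0r. Qed.

Lemma gamma_first_sample_near_mic : exists2 eta, 0 < eta & forall r m,
  enorm (r - rmic m) < eta -> kappa 0 / 2 / (4 * pi * enorm (r - rmic m)) <= gamma0 r m.
Proof.
have [e e_gt0 kappa_near0] : exists2 e, 0 < e &
    forall t, `|t| < e -> kappa 0 / 2 <= kappa t.
  have half_lt : kappa 0 / 2 < kappa 0 by rewrite ltr_pdivrMr // ltr_pMr // ltr1n.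
  have [e e_gt0 kappa_gt] := iffLR (nbhs_ballP _ _) (cvgr_gt _ (@kappa_cont 0) _ half_lt).
  exists e => // t te; apply/ltW/kappa_gt.
  by rewrite -ball_normE /= sub0r normrN.
exists (e * c); first by rewrite mulr_gt0.
move=> r m d_lt; rewrite gamma_first_sample.
rewrite ler_wpM2r ?invr_ge0 ?mulr_ge0 ?pi_ge0 ?sqrtr_ge0 //.
apply: kappa_near0; rewrite normrN ger0_norm ?divr_ge0 ?sqrtr_ge0 ?(ltW c_gt0) //.
by rewrite ltr_pdivrMr.
Qed.

Lemma gamma_first_sample_lbound : exists2 L, 0 <= L &
  forall r m, inC c fs N rmic r -> - L <= gamma0 r m.
Proof.
have [eta eta_gt0 gamma_near] := gamma_first_sample_near_mic.
have Tmax_ge0 : 0 <= Tmax fs N by rewrite divr_ge0 // ltW.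
have [t0 _ kappa_min] : exists2 t0, t0 \in `[- Tmax fs N, 0] &
    forall t, t \in `[- Tmax fs N, 0] -> kappa t0 <= kappa t.
  apply: EVT_min; first by rewrite oppr_le0.
  exact: continuous_subspaceT.
exists (`|kappa t0| / (4 * pi * eta)); first by rewrite divr_ge0 // ltW // mulr_gt0.
move=> r m r_in; have d_gt0 := inC_dist_gt0 m r_in.
have [d_lt|d_ge] := ltP (enorm (r - rmic m)) eta.
  apply: le_trans (gamma_near _ _ d_lt); apply: (@le_trans _ _ 0).
    by rewrite oppr_le0 divr_ge0 // ltW // mulr_gt0.
  by rewrite !divr_ge0 ?(ltW kappa0_gt0) // ltW // mulr_gt0.
rewrite gamma_first_sample; set d := enorm _ in d_gt0 d_ge *.
have kappa_ge : - `|kappa t0| <= kappa (- (d / c)).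
  apply: le_trans (kappa_min _ _); first exact: lerNnormlW.
  rewrite in_itv /= lerN2 oppr_le0 divr_ge0 ?sqrtr_ge0 ?(ltW c_gt0) // andbT.
  by rewrite ler_pdivrMr // mulrC; case: r_in => /(_ m).
apply: (@le_trans _ _ (- `|kappa t0| / (4 * pi * d))); last first.
  by apply: ler_wpM2r kappa_ge; rewrite invr_ge0 ltW // mulr_gt0.
rewrite !mulNr lerN2 ler_wpM2l // lef_pV2 ?posrE ?mulr_gt0 ?pi_gt0 //.
by rewrite ler_pM2l.
Qed.

Lemma Gamma_entry (a : 'I_K -> R) (r : 'I_K -> 'rV[R]_3) i j :
  Gamma kappa c fs N rmic a r i j = \sum_(k < K) a k * gamma kappa c fs N rmic (r k) i j.
Proof. by rewrite summxE; apply: eq_bigr => k _; rewrite mxE. Qed.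

Lemma reduced_amplitude_bounded (Sa E : R) :
  exists B, forall (a : 'I_K -> R) (r : 'I_K -> 'rV[R]_3),
  in_dom c fs N rmic a r -> (forall k, a k <= Sa) ->
  (forall m, Gamma kappa c fs N rmic a r m n0 <= E) ->
  forall k m, reduced_amplitude rmic (a k) (r k) m <= B.
Proof.
have [eta eta_gt0 gamma_near] := gamma_first_sample_near_mic.
have [L L_ge0 gamma_lb] := gamma_first_sample_lbound.
have half_kappa0_gt0 : 0 < kappa 0 / 2 by rewrite divr_gt0.
exists (Num.max (Sa / (4 * pi * eta)) ((kappa 0 / 2)^-1 * (E + K%:R * (Sa * L)))).
move=> a r [a_ge0 r_in] a_le Gamma_le k m; rewrite /reduced_amplitude le_max.
set d := enorm _; have d_gt0 : 0 < d := inC_dist_gt0 m (r_in k).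
have [d_lt|d_ge] := ltP d eta; apply/orP; [right|left]; last first.
  apply: ler_pM (a_ge0 k) _ (a_le k) _; first by rewrite invr_ge0 ltW // mulr_gt0.
  by rewrite lef_pV2 ?posrE ?mulr_gt0 ?pi_gt0 // ler_pM2l.
have SaL_ge0 : 0 <= Sa * L by rewrite mulr_ge0 // (le_trans (a_ge0 k)).
have term_ge j : - (Sa * L) <= a j * gamma0 (r j) m.
  apply: (@le_trans _ _ (- (a j * L))); first by rewrite lerN2 ler_wpM2r.
  by rewrite -mulrN ler_wpM2l ?gamma_lb.
have term_le : a k * gamma0 (r k) m <= E + K%:R * (Sa * L).
  have : a k * gamma0 (r k) m + Sa * L <= \sum_j (a j * gamma0 (r j) m + Sa * L).
    by apply: ler_psum_term => j; rewrite -lerBlDr sub0r term_ge.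
  rewrite big_split /= sumr_const card_ord -Gamma_entry -[Sa * L *+ K]mulr_natl.
  by have := Gamma_le m; lra.
rewrite ler_pdivlMl //; apply: le_trans term_le.
apply: le_trans (ler_wpM2l (a_ge0 k) (gamma_near _ _ d_lt)).
by rewrite -/d mulrCA mulrA.
Qed.

End first_sample.

Section objective_bounds.
Variables (R : realType) (kappa : R -> R) (c fs : R) (M N K : nat).
Variables (rmic : 'I_M -> 'rV[R]_3) (x : 'M[R]_(M, N)).
Variables (a : 'I_K -> R) (r : 'I_K -> 'rV[R]_3).

Local Notation G := (Gamma kappa c fs N rmic a r).

Lemma Gamma_entry_le_Tobj (BT : R) i j : Tobj kappa c fs rmic x a r <= BT ->
  `|G i j| <= frob x + Num.sqrt (2 * BT).
Proof.
move=> T_le; have -> : G i j = x i j - (x - G) i j by rewrite !mxE; ring.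
apply: (le_trans (ler_normB _ _)); apply: lerD; first exact: entry_le_frob.
have frob_ge0 : 0 <= frob (x - G) by exact: sqrtr_ge0.
apply: le_trans (entry_le_frob (x - G) i j) _.
have BT_ge0 : 0 <= BT by apply: le_trans T_le; rewrite mulr_ge0 ?sqr_ge0.
rewrite -[frob _]ger0_norm // -sqrtr_sqr ler_sqrt ?mulr_ge0 //.
by move: T_le; rewrite /Tobj; lra.
Qed.

Lemma amplitude_le_entries (C0 E : R) k : 0 < C0 -> 0 <= E ->
  in_dom c fs N rmic a r -> C0 * (\sum_k a k) <= frob G ->
  (forall i j, `|G i j| <= E) -> a k <= Num.sqrt (M * N)%:R * E / C0.
Proof.
move=> C0_gt0 E_ge0 [a_ge0 _] lower_bound G_le.
rewrite ler_pdivlMr // mulrC; apply: le_trans (frob_le_entries E_ge0 G_le).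
apply: le_trans lower_bound; rewrite ler_pM2l //.
exact: ler_psum_term.
Qed.

End objective_bounds.

Theorem lemma1 (R : realType) (c fs : R) (M N K : nat)
  (rmic : 'I_M -> 'rV[R]_3) (x : 'M[R]_(M, N)) (kappa : R -> R)
  (a_seq : nat -> 'I_K -> R) (r_seq : nat -> 'I_K -> 'rV[R]_3) :
  0 < c -> 0 < fs -> (1 <= M)%N -> (1 <= N)%N -> (1 <= K)%N ->
  continuous kappa -> 0 < kappa 0 ->
  kappa t @[t --> +oo] --> 0 -> kappa t @[t --> -oo] --> 0 ->
  amplitude_lower_bounded kappa c fs N rmic K ->
  (forall l, in_dom c fs N rmic (a_seq l) (r_seq l)) ->
  Tobj kappa c fs rmic x (a_seq l) (r_seq l) @[l --> \oo] --> infT kappa c fs rmic K x ->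
  exists phi : nat -> nat, (forall l, (phi l < phi l.+1)%N) /\
    forall k : 'I_K,
      (exists (rk : 'rV[R]_3) (ak : R),
          inC c fs N rmic rk /\ 0 <= ak /\
          r_seq (phi l) k @[l --> \oo] --> rk /\
          a_seq (phi l) k @[l --> \oo] --> ak)
      \/
      (exists (mk : 'I_M) (atk : R),
          0 <= atk /\
          r_seq (phi l) k @[l --> \oo] --> rmic mk /\
          a_seq (phi l) k @[l --> \oo] --> 0 /\
          a_seq (phi l) k / (4 * pi * enorm (r_seq (phi l) k - rmic mk)) @[l --> \oo] --> atk).
Proof.
move=> c_gt0 fs_gt0 M_ge1 N_ge1 _ kappa_cont kappa0_gt0 _ _ [C0 [C0_gt0 ampl_lb]] in_seq T_cvg.
pose m0 : 'I_M := Ordinal M_ge1; pose n0 : 'I_N := Ordinal N_ge1.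
have [BT T_ub] := bounded_fun_has_ubound (cvg_seq_bounded (cvgP _ T_cvg)).
pose E := frob x + Num.sqrt (2 * BT).
have Gamma_le l i j := Gamma_entry_le_Tobj i j (T_ub _ (imageT _ l)).
have E_ge0 : 0 <= E by rewrite addr_ge0 ?sqrtr_ge0.
have a_le l k : a_seq l k <= Num.sqrt (M * N)%:R * E / C0.
  exact: amplitude_le_entries C0_gt0 E_ge0 (in_seq l) (ampl_lb _ _ (in_seq l)) (Gamma_le l).
have [B red_le] := reduced_amplitude_bounded rmic c_gt0 fs_gt0 kappa_cont kappa0_gt0 K
  (erefl : nat_of_ord n0 = 0%N) (Num.sqrt (M * N)%:R * E / C0) E.
have [phi phi_incr phi_cvg] := source_subseq_cvg m0 in_seq
  (fun l => red_le _ _ (in_seq l) (a_le l)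
     (fun m => le_trans (ler_norm _) (Gamma_le l m n0))).
exists phi; split=> [l|k]; first exact: (iffRL (increasing_seqP _) phi_incr l).
have [rk [r_cvg red_cvg]] := phi_cvg k.
have [[ak [rk_in [ak_ge0 a_cvg]]]|] := source_limit_cases m0
  (a := fun l => a_seq (phi l) k) (fun l => (in_seq (phi l)).1 k)
  (fun l => (in_seq (phi l)).2 k) r_cvg red_cvg.
  by left; exists rk, ak.
by right.
Qed.
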